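(* Let $\mathsf{L}\in\{\mathbf{PD},\mathsf{InqL},\mathbf{PT}\}$ and let $\phi(p_1,\dots,p_n)$ be a consistent formula in the language of $\mathsf L$ with variables among $p_1,\dots,p_n$. The following are equivalent: (i) $\phi\dashv\vdash_{\mathsf L}\Theta_X$ for some nonempty team $X$ on $\{p_1,\dots,p_n\}$; (ii) $\phi$ is flat; (iii) $\phi$ is $\mathcal F$-projective in $\mathsf L$, where $\mathcal F$ is the class of all flat substitutions of $\mathsf L$.
   Context: A valuation is a function from the set Prop of propositional variables to $\{0,1\}$; a team is a set of valuations; a team on $V$ is a set of functions $V\to\{0,1\}$. Formulas of $\mathbf{PT}$: $\phi::=p\mid\bot\mid\top\mid\,=\!(\phi_1,\dots,\phi_n,\phi)\mid\neg\phi\mid\phi\wedge\phi\mid\phi\otimes\phi\mid\phi\vee\phi\mid\phi\to\phi$. Satisfaction on a team $X$: $X\models p$ iff $v(p)=1$ for all $v\in X$; $X\models\bot$ iff $X=\emptyset$; $X\models\top$ always; $\wedge$ conjunction; $X\models\phi\otimes\psi$ iff $X=Y\cup Z$ with $Y\models\phi$, $Z\models\psi$; $X\models\phi\vee\psi$ iff $X\models\phi$ or $X\models\psi$; $X\models\phi\to\psi$ iff every $Y\subseteq X$ with $Y\models\phi$ satisfies $\psi$; $X\models\neg\phi$ iff $\{v\}\not\models\phi$ for all $v\in X$; $X\models\,=\!(\phi_1,\dots,\phi_n,\psi)$ iff $X\models\bigwedge_i(\phi_i\vee(\phi_i\to\bot))\to(\psi\vee(\psi\to\bot))$. $\phi$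 is flat if for all teams $X$: $X\models\phi$ iff $\{v\}\models\phi$ for all $v\in X$. Formulas of $\mathbf{PD}$: $\phi::=p\mid\bot\mid\top\mid\,=\!(\vec\alpha,\beta)\mid\neg\phi\mid\phi\wedge\phi\mid\phi\otimes\phi$ with $\vec\alpha,\beta$ flat, same clauses (for flat arguments the dependence clause says that any $v,v'\in X$ agreeing on the truth of each $\alpha_i$ on singletons agree on the truth of $\beta$). $\mathsf{InqL}$: formulas built from $p,\bot,\top$ by $\wedge,\vee,\to$ with $\neg\phi:=\phi\to\bot$. For finite $\Gamma$, $\Gamma\vdash_{\mathsf L}\phi$ iff all formulas are in the language of $\mathsf L$ and every team satisfying all of $\Gamma$ satisfies $\phi$; $\phi\dashv\vdash_{\mathsf L}\psi$ means both directions. $\phi$ is consistent if some nonempty team satisfies it. For a nonempty team $X$ on $V=\{p_1,\dots,p_n\}$, with $p^1:=p$, $p^0:=\neg p$: $\Theta_X:=\bigotimes_{v\in X}(p_1^{v(p_1)}\wedge\dots\wedge p_n^{v(p_n)})$ when $\mathsf L=\mathbf{PD}$, and $\Theta_X:=\neg\neg\bigvee_{v\in X}(p_1^{v(p_1)}\wedge\dots\wedge p_n^{v(p_n)})$ when $\mathsf L\in\{\mathsf{InqL},\mathbf{PT}\}$. A substitution of $\mathsf L$ is a map on $\mathsf L$-formulas commuting with all connectives and atoms; it is flat if each $\sigma(p)$ is flat. For a set $\mathcal S$ of substitutions, $\phi$ is $\mathcal S$-projective in $\mathsf L$ if there is $\sigma\in\mathcal S$ with $\vdash_{\mathsf L}\sigma(\phi)$,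 and $\phi,\sigma(p)\vdash_{\mathsf L}p$ and $\phi,p\vdash_{\mathsf L}\sigma(p)$ for all propositional variables $p$. *)

From Stdlib Require Import List.
Import ListNotations.

Definition valuation := nat -> bool.
Definition team := valuation -> Prop.

Definition subteam (Y X : team) : Prop := forall v, Y v -> X v.
Definition empty_team (X : team) : Prop := forall v, ~ X v.
Definition singleton (v : valuation) : team := fun w => w = v.

(* Formulas of PT (PD and InqL formulas are sub-languages, see [inL]).
   Dep [phi_1; ...; phi_n] phi  is  =(phi_1,...,phi_n,phi). *)
Inductive form : Type :=
| Atom : nat -> form
| Bot : form
| Top : form
| Dep : list form -> form -> form
| Neg : form -> form
| And : form -> form -> form
| Tensor : form -> form -> form
| Or : form -> form -> form
| Imp : form -> form -> form.

Fixpoint sat (f : form) (X : team) {struct f} : Prop :=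
  match f with
  | Atom p => forall v, X v -> v p = true
  | Bot => empty_team X
  | Top => True
  | Dep l c =>
      (* X |= /\_i (phi_i \/ (phi_i -> _|_)) -> (c \/ (c -> _|_)) *)
      forall Y : team, subteam Y X ->
        (fix allc (l : list form) : Prop :=
           match l with
           | nil => True
           | a :: l' =>
               (sat a Y \/ (forall Z, subteam Z Y -> sat a Z -> empty_team Z))
               /\ allc l'
           end) l ->
        (sat c Y \/ (forall Z, subteam Z Y -> sat c Z -> empty_team Z))
  | Neg a => forall v, X v -> ~ sat a (singleton v)
  | And a b => sat a X /\ sat b X
  | Tensor a b => exists Y Z : team,
      (forall v, X v <-> (Y v \/ Z v)) /\ sat a Y /\ sat b Z
  | Or a b => sat a X \/ sat b X
  | Imp a b => forall Y : team, subteam Y X -> sat a Y -> sat b Y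
  end.

Definition flat (f : form) : Prop :=
  forall X : team, sat f X <-> (forall v, X v -> sat f (singleton v)).

Definition consistent (f : form) : Prop :=
  exists X : team, (exists v, X v) /\ sat f X.

Fixpoint occurs (p : nat) (f : form) {struct f} : Prop :=
  match f with
  | Atom q => q = p
  | Bot | Top => False
  | Dep l c =>
      (fix occl (l : list form) : Prop :=
         match l with nil => False | a :: l' => occurs p a \/ occl l' end) l
      \/ occurs p c
  | Neg a => occurs p a
  | And a b | Tensor a b | Or a b | Imp a b => occurs p a \/ occurs p b
  end.

Inductive logic : Type := PD | InqL | PT.

Fixpoint inL (L : logic) (f : form) {struct f} : Prop :=
  match L with
  | PT => True
  | InqL =>
      match f with
      | Atom _ | Bot | Top => True
      | And a b | Or a b | Imp a b => inL L a /\ inL L b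
      | _ => False
      end
  | PD =>
      match f with
      | Atom _ | Bot | Top => True
      | Dep l c =>
          (fix allpd (l : list form) : Prop :=
             match l with
             | nil => True
             | a :: l' => (inL L a /\ flat a) /\ allpd l'
             end) l
          /\ (inL L c /\ flat c)
      | Neg a => inL L a
      | And a b | Tensor a b => inL L a /\ inL L b
      | _ => False
      end
  end.

Definition entails (L : logic) (Gamma : list form) (f : form) : Prop :=
  (forall g, In g Gamma -> inL L g) /\ inL L f /\
  forall X : team, (forall g, In g Gamma -> sat g X) -> sat f X.

Definition equivL (L : logic) (f g : form) : Prop :=
  entails L [f] g /\ entails L [g] f.

Definition negL (L : logic) (f : form) : form :=
  match L with InqL => Imp f Bot | _ => Neg f end.

Fixpoint bigAnd (l : list form) : form :=
  match l with nil => Top | [a] => a | a :: l' => And a (bigAnd l') end.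
Fixpoint bigOr (l : list form) : form :=
  match l with nil => Bot | [a] => a | a :: l' => Or a (bigOr l') end.
Fixpoint bigTensor (l : list form) : form :=
  match l with nil => Bot | [a] => a | a :: l' => Tensor a (bigTensor l') end.

Definition literal (L : logic) (p : nat) (b : bool) : form :=
  if b then Atom p else negL L (Atom p).

Definition charform (L : logic) (ps : list nat) (v : valuation) : form :=
  bigAnd (map (fun p => literal L p (v p)) ps).

(* Theta_X for a nonempty team X on {p_1..p_n}, the team being given by a
   (nonempty) list of valuations, only their values on ps being relevant. *)
Definition Theta (L : logic) (ps : list nat) (X : list valuation) : form :=
  match L with
  | PD => bigTensor (map (charform L ps) X)
  | _ => negL L (negL L (bigOr (map (charform L ps) X)))
  end.

Fixpoint subst (s : nat -> form) (f : form) {struct f} : form :=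
  match f with
  | Atom p => s p
  | Bot => Bot
  | Top => Top
  | Dep l c => Dep (map (subst s) l) (subst s c)
  | Neg a => Neg (subst s a)
  | And a b => And (subst s a) (subst s b)
  | Tensor a b => Tensor (subst s a) (subst s b)
  | Or a b => Or (subst s a) (subst s b)
  | Imp a b => Imp (subst s a) (subst s b)
  end.

Definition substitution_of (L : logic) (s : nat -> form) : Prop :=
  forall f, inL L f -> inL L (subst s f).

Definition flat_substitution (L : logic) (s : nat -> form) : Prop :=
  substitution_of L s /\ forall p, flat (s p).

Definition flat_projective (L : logic) (f : form) : Prop :=
  exists s, flat_substitution L s /\
    entails L [] (subst s f) /\
    (forall p, entails L [f; s p] (Atom p)) /\
    (forall p, entails L [f; Atom p] (s p)).

(* Flat formulas are exactly those whose satisfying teams are all sets of valuations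
   drawn from a fixed set; for Theta_X that set consists of the valuations agreeing on
   p_1..p_n with a member of X, and by locality every flat phi over p_1..p_n is of this
   form.  A flat substitution s acts on teams through the valuation map
   v |-> v_s, v_s(p) = 1 iff {v} |= s(p), in the sense that X |= s(phi) iff the image of
   X satisfies phi.  For a flat phi and a fixed w with {w} |= phi, the substitution
   s(p) = phi /\ p if w(p) = 0 and s(p) = phi -> p if w(p) = 1 fixes every valuation
   satisfying phi and sends all others to w, which makes phi projective.  Conversely,
   the projectivity conditions force v_s = v whenever {v} |= phi, so |- s(phi) applied
   to a team all of whose singletons satisfy phi gives phi on the team itself. *)

From Stdlib Require Import PeanoNat List Setoid Bool Classical ClassicalDescription.
From Stdlib Require Import FunctionalExtensionality PropExtensionality.
Import ListNotations.

Lemma team_ext (X Y : team) : (forall v, X v <-> Y v) -> X = Y.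
Proof.
  intro H; apply functional_extensionality; intro v; apply propositional_extensionality; auto.
Qed.

Definition form_nested_ind (P : form -> Prop)
  (HA : forall n, P (Atom n)) (HB : P Bot) (HT : P Top)
  (HD : forall l c, Forall P l -> P c -> P (Dep l c))
  (HN : forall a, P a -> P (Neg a))
  (HAn : forall a b, P a -> P b -> P (And a b))
  (HTe : forall a b, P a -> P b -> P (Tensor a b))
  (HO : forall a b, P a -> P b -> P (Or a b))
  (HI : forall a b, P a -> P b -> P (Imp a b)) : forall f, P f :=
  fix F f := match f with
  | Atom n => HA n | Bot => HB | Top => HT
  | Dep l c => HD l c ((fix G l := match l return Forall P l with
       | nil => Forall_nil P | a :: l' => Forall_cons a (F a) (G l') end) l) (F c)
  | Neg a => HN a (F a)
  | And a b => HAn a b (F a) (F b)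
  | Tensor a b => HTe a b (F a) (F b)
  | Or a b => HO a b (F a) (F b)
  | Imp a b => HI a b (F a) (F b)
  end.

Definition determined (a : form) (Y : team) : Prop :=
  sat a Y \/ (forall Z, subteam Z Y -> sat a Z -> empty_team Z).

Lemma sat_Dep l c X :
  sat (Dep l c) X <->
  forall Y, subteam Y X -> Forall (fun a => determined a Y) l -> determined c Y.
Proof.
  simpl; unfold determined.
  split; intros H Y HY Hl; apply H; auto; clear H HY; induction l; simpl in *; auto.
  - apply Forall_cons_iff in Hl as [Ha Hl]; split; [exact Ha | exact (IHl Hl)].
  - destruct Hl; constructor; auto.
Qed.

Lemma occurs_Dep p l c : occurs p (Dep l c) <-> Exists (occurs p) l \/ occurs p c.
Proof.
  simpl; split; intros [H|H]; auto; left; induction l; simpl in *.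
  - contradiction.
  - destruct H; [constructor | apply Exists_cons_tl]; auto.
  - inversion H.
  - apply Exists_cons in H as [H|H]; [left | right; exact (IHl H)]; exact H.
Qed.

Lemma inL_PD_Dep l c :
  inL PD (Dep l c) <-> Forall (fun a => inL PD a /\ flat a) l /\ (inL PD c /\ flat c).
Proof.
  simpl; split; intros [Hl Hc]; split; auto; clear Hc; induction l; simpl in *; auto.
  - destruct Hl; constructor; auto.
  - apply Forall_cons_iff in Hl as [Ha Hl]; split; [exact Ha | exact (IHl Hl)].
Qed.

Lemma inL_PT f : inL PT f.
Proof. destruct f; exact I. Qed.

Lemma inL_Atom L p : inL L (Atom p).
Proof. destruct L; exact I. Qed.

Lemma sat_subteam f X Y : sat f X -> subteam Y X -> sat f Y.
Proof.
  revert X Y; induction f; simpl; intros X Y H HY; unfold subteam, empty_team in *;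
    try (intros v Hv; exact (H v (HY v Hv))); eauto.
  - destruct H; eauto.
  - destruct H as (Y1 & Z1 & HU & H1 & H2).
    exists (fun v => Y v /\ Y1 v), (fun v => Y v /\ Z1 v); split; [|split].
    + intro v; split; [intro Hv; destruct (proj1 (HU v) (HY v Hv)) | intros [[]|[]]]; auto.
    + apply (IHf1 Y1); auto; intros v []; auto.
    + apply (IHf2 Z1); auto; intros v []; auto.
  - destruct H; eauto.
Qed.

Lemma sat_singleton f X v : sat f X -> X v -> sat f (singleton v).
Proof. intros H Xv; apply (sat_subteam f X); auto; intros u ->; auto. Qed.

Definition pointwise (f : form) (P : valuation -> Prop) : Prop :=
  forall X, sat f X <-> forall v, X v -> P v.

Lemma pointwise_singleton f P v : pointwise f P -> (sat f (singleton v) <-> P v).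
Proof.
  intro H; rewrite (H _); unfold singleton; split; [intro Hv; apply Hv | intros Pv w ->]; auto.
Qed.

Lemma pointwise_flat f P : pointwise f P -> flat f.
Proof.
  intros H X; rewrite (H X).
  split; intros Hf v Xv; specialize (Hf v Xv); rewrite (pointwise_singleton _ _ _ H) in *; auto.
Qed.

Lemma flat_pointwise f : flat f -> pointwise f (fun v => sat f (singleton v)).
Proof. intros H X; apply H. Qed.

Lemma pointwise_ext f P Q : pointwise f P -> (forall v, P v <-> Q v) -> pointwise f Q.
Proof. intros H E X; rewrite (H X); split; intros Hf v Xv; apply E; auto. Qed.

Lemma pointwise_Atom p : pointwise (Atom p) (fun v => v p = true).
Proof. intro X; reflexivity. Qed.

Lemma pointwise_Neg a : pointwise (Neg a) (fun v => ~ sat a (singleton v)).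
Proof. intro X; reflexivity. Qed.

Lemma pointwise_And a b P Q :
  pointwise a P -> pointwise b Q -> pointwise (And a b) (fun v => P v /\ Q v).
Proof. intros Ha Hb X; simpl; rewrite (Ha X), (Hb X); firstorder. Qed.

Lemma pointwise_Tensor a b P Q :
  pointwise a P -> pointwise b Q -> pointwise (Tensor a b) (fun v => P v \/ Q v).
Proof.
  intros Ha Hb X; simpl; split.
  - intros (Y & Z & HU & HY & HZ) v Xv; rewrite (Ha Y) in HY; rewrite (Hb Z) in HZ.
    destruct (proj1 (HU v) Xv); auto.
  - intro H; exists (fun v => X v /\ P v), (fun v => X v /\ ~ P v); split; [|split].
    + intro v; split; [intro Xv; destruct (classic (P v)) | intros [[]|[]]]; auto.
    + rewrite (Ha _); intros v []; auto.
    + rewrite (Hb _); intros v [Xv nPv]; destruct (H v Xv); tauto.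
Qed.

Lemma pointwise_Imp a b P Q :
  pointwise a P -> pointwise b Q -> pointwise (Imp a b) (fun v => P v -> Q v).
Proof.
  intros Ha Hb X; simpl; split.
  - intros H v Xv Pv; rewrite <- (pointwise_singleton _ _ _ Hb); apply H.
    + intros w ->; auto.
    + apply (pointwise_singleton _ _ _ Ha); auto.
  - intros H Y HY; rewrite (Ha Y), (Hb Y); intros HP v Yv; apply H; auto.
Qed.

Lemma pointwise_Imp_Bot a Q :
  (forall v, sat a (singleton v) <-> Q v) -> pointwise (Imp a Bot) (fun v => ~ Q v).
Proof.
  intros Ha X; simpl; split.
  - intros H v Xv Qv; apply (H (singleton v)) with v; try reflexivity.
    + intros w ->; auto.
    + apply Ha; auto.
  - intros H Y HY HaY v Yv; apply (H v (HY v Yv)), Ha, (sat_singleton a Y); auto.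
Qed.

Lemma sat_bigOr_map {A} (F : A -> form) xs X : xs <> [] ->
  (sat (bigOr (map F xs)) X <-> exists x, In x xs /\ sat (F x) X).
Proof.
  intro Hne; induction xs as [|x [|y xs] IH]; [congruence| |].
  - simpl; split; [eauto | intros (z & [->|[]] & H); auto].
  - change (sat (Or (F x) (bigOr (map F (y :: xs)))) X <->
            exists z, In z (x :: y :: xs) /\ sat (F z) X).
    simpl sat; rewrite IH by congruence; split.
    + intros [H|(z & Hz & H)]; [exists x | exists z]; simpl; auto.
    + intros (z & [->|Hz] & H); eauto.
Qed.

Lemma pointwise_bigAnd_map {A} (F : A -> form) (P : A -> valuation -> Prop) xs :
  (forall x, In x xs -> pointwise (F x) (P x)) ->
  pointwise (bigAnd (map F xs)) (fun v => forall x, In x xs -> P x v).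
Proof.
  intro H; induction xs as [|x [|y xs] IH].
  - intro X; simpl; split; auto; intros _ v _ x [].
  - apply pointwise_ext with (P x); [apply H; simpl; auto|].
    intro v; split; [intros Hv z [->|[]] | intro Hv; apply Hv; simpl]; auto.
  - change (pointwise (And (F x) (bigAnd (map F (y :: xs))))
              (fun v => forall z, In z (x :: y :: xs) -> P z v)).
    eapply pointwise_ext.
    + apply pointwise_And; [apply H | apply IH; intros; apply H]; simpl; auto.
    + intro v; split; [intros [Hx Hxs] z [->|Hz] | intro Hv; split; intros; apply Hv];
        simpl; auto.
Qed.

Lemma pointwise_bigTensor_map {A} (F : A -> form) (P : A -> valuation -> Prop) xs :
  xs <> [] -> (forall x, In x xs -> pointwise (F x) (P x)) ->
  pointwise (bigTensor (map F xs)) (fun v => exists x, In x xs /\ P x v).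
Proof.
  intros Hne H; induction xs as [|x [|y xs] IH]; [congruence| |].
  - apply pointwise_ext with (P x); [apply H; simpl; auto|].
    intro v; split; [exists x; simpl; auto | intros (z & [->|[]] & Hz); auto].
  - change (pointwise (Tensor (F x) (bigTensor (map F (y :: xs))))
              (fun v => exists z, In z (x :: y :: xs) /\ P z v)).
    eapply pointwise_ext.
    + apply pointwise_Tensor; [apply H | apply IH; [congruence | intros; apply H]]; simpl; auto.
    + intro v; split.
      * intros [Hv|(z & Hz & Hv)]; [exists x | exists z]; simpl; auto.
      * intros (z & [->|Hz] & Hv); eauto.
Qed.

Lemma pointwise_literal L p b : pointwise (literal L p b) (fun v => v p = b).
Proof.
  destruct b; [apply pointwise_Atom|].
  assert (Hp : forall v, sat (Atom p) (singleton v) <-> v p = true)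
    by (intro v; apply (pointwise_singleton _ _ _ (pointwise_Atom p))).
  destruct L; simpl; eapply pointwise_ext;
    try apply pointwise_Neg; try (apply pointwise_Imp_Bot, Hp);
    intro v; cbv beta; try rewrite Hp; destruct (v p); intuition congruence.
Qed.

Definition agree (ps : list nat) (v w : valuation) : Prop := forall q, In q ps -> v q = w q.

Lemma pointwise_charform L ps w : pointwise (charform L ps w) (fun v => agree ps v w).
Proof.
  eapply pointwise_ext.
  - apply pointwise_bigAnd_map with (P := fun p v => v p = w p); intros; apply pointwise_literal.
  - reflexivity.
Qed.

Lemma pointwise_Theta L ps Xl : Xl <> [] ->
  pointwise (Theta L ps Xl) (fun v => exists w, In w Xl /\ agree ps v w).
Proof.
  intro Hne.
  assert (Hor : forall v, sat (bigOr (map (charform L ps) Xl)) (singleton v) <->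
                          exists w, In w Xl /\ agree ps v w).
  { intro v; rewrite sat_bigOr_map by auto.
    split; intros (w & Hw & H); exists w; split; auto;
      apply (pointwise_singleton _ _ _ (pointwise_charform L ps w)); auto. }
  destruct L; simpl in *.
  - apply pointwise_bigTensor_map; auto; intros; apply pointwise_charform.
  - eapply pointwise_ext.
    + apply pointwise_Imp_Bot with (Q := fun v => ~ exists w, In w Xl /\ agree ps v w).
      intro v; apply (pointwise_singleton _ _ _ (pointwise_Imp_Bot _ _ Hor)).
    + intro v; split; [apply NNPP | tauto].
  - eapply pointwise_ext; [apply pointwise_Neg|].
    intro v; cbv beta; rewrite (pointwise_singleton _ _ _ (pointwise_Neg _)), Hor.
    split; [apply NNPP | tauto].
Qed.

Lemma inL_bigAnd_map {A} L (F : A -> form) xs :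
  (forall x, inL L (F x)) -> inL L (bigAnd (map F xs)).
Proof.
  intro H; destruct L; [| | apply inL_PT];
    induction xs as [|x [|y xs] IH]; simpl in *; auto.
Qed.

Lemma inL_charform L ps w : inL L (charform L ps w).
Proof. apply inL_bigAnd_map; intros; destruct L, (w x); simpl; auto. Qed.

Lemma inL_Theta L ps Xl : inL L (Theta L ps Xl).
Proof.
  destruct L; simpl; [| | exact I];
    [| split; auto; split; auto];
    induction Xl as [|x [|y xs] IH]; simpl in *; auto using inL_charform.
Qed.

Definition img (g : valuation -> valuation) (X : team) : team :=
  fun u => exists v, X v /\ u = g v.

Lemma forall_img g X (Q : valuation -> Prop) :
  (forall v, X v -> Q (g v)) <-> (forall u, img g X u -> Q u).
Proof. split; [intros H u (v & Xv & ->) | intros H v Xv; apply H; exists v]; auto. Qed.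

Lemma img_singleton g v : img g (singleton v) = singleton (g v).
Proof.
  apply team_ext; intro u; unfold img, singleton.
  split; [intros (w & -> & ->) | intros ->; eauto]; auto.
Qed.

Lemma empty_team_img g X : empty_team X <-> empty_team (img g X).
Proof.
  unfold empty_team; split; [intros H u (v & Xv & _); exact (H v Xv) | intros H v Xv].
  apply (H (g v)); exists v; auto.
Qed.

Lemma img_preimage g X Y' :
  subteam Y' (img g X) -> img g (fun v => X v /\ Y' (g v)) = Y'.
Proof.
  intro HY; apply team_ext; intro u; split; [intros (v & [_ Yv] & ->); auto | intro Yu].
  destruct (HY u Yu) as (v & Xv & ->); exists v; auto.
Qed.

Lemma forall_subteam_img g X (Q : team -> Prop) :
  (forall Y, subteam Y X -> Q (img g Y)) <-> (forall Y', subteam Y' (img g X) -> Q Y').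
Proof.
  split; intros H Y HY.
  - rewrite <- (img_preimage g X Y HY); apply H; intros v []; auto.
  - apply H; intros u (v & Yv & ->); exists v; auto.
Qed.

Lemma union_img g X (Q1 Q2 : team -> Prop) :
  (exists Y Z, (forall v, X v <-> Y v \/ Z v) /\ Q1 (img g Y) /\ Q2 (img g Z)) <->
  (exists Y' Z', (forall u, img g X u <-> Y' u \/ Z' u) /\ Q1 Y' /\ Q2 Z').
Proof.
  split.
  - intros (Y & Z & HU & H1 & H2); exists (img g Y), (img g Z); split; auto.
    intro u; split.
    + intros (v & Xv & ->); destruct (proj1 (HU v) Xv); [left | right]; exists v; auto.
    + intros [(v & Yv & ->)|(v & Zv & ->)]; exists v; rewrite HU; auto.
  - intros (Y' & Z' & HU & H1 & H2).
    exists (fun v => X v /\ Y' (g v)), (fun v => X v /\ Z' (g v)); split; [|split].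
    + intro v; split; [intro Xv | intros [[]|[]]]; auto.
      destruct (proj1 (HU (g v))); [exists v | left | right]; auto.
    + rewrite img_preimage; auto; intros u Yu; apply HU; auto.
    + rewrite img_preimage; auto; intros u Zu; apply HU; auto.
Qed.

Section SubstitutionLemma.

Variables (s : nat -> form) (g : valuation -> valuation).

Lemma determined_subst a :
  (forall X, sat (subst s a) X <-> sat a (img g X)) ->
  forall X, determined (subst s a) X <-> determined a (img g X).
Proof.
  intros Ha X; unfold determined.
  rewrite <- (forall_subteam_img g X (fun Z => sat a Z -> empty_team Z)).
  setoid_rewrite Ha; setoid_rewrite <- (empty_team_img g); reflexivity.
Qed.

Lemma sat_subst f :
  (forall p, occurs p f -> pointwise (s p) (fun v => g v p = true)) ->
  forall X, sat (subst s f) X <-> sat f (img g X).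
Proof.
  induction f as [p| | |l c Hl Hc|a Ha|a b Ha Hb|a b Ha Hb|a b Ha Hb|a b Ha Hb]
    using form_nested_ind; intros Hs X.
  - rewrite (Hs p eq_refl X); apply (forall_img g X (fun u => u p = true)).
  - apply empty_team_img.
  - reflexivity.
  - assert (Hdl : forall a, In a l -> forall Y,
                 determined (subst s a) Y <-> determined a (img g Y)).
    { rewrite Forall_forall in Hl; intros a Ha; apply determined_subst, Hl; auto.
      intros p Hp; apply Hs, occurs_Dep; left; apply Exists_exists; eauto. }
    assert (Hdc : forall Y, determined (subst s c) Y <-> determined c (img g Y))
      by (apply determined_subst, Hc; intros p Hp; apply Hs, occurs_Dep; auto).
    assert (Hdall : forall Y, (forall a, In a l -> determined (subst s a) Y) <->
                              (forall a, In a l -> determined a (img g Y)))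
      by (intro Y; split; intros H a Ha; apply Hdl; auto).
    simpl subst; rewrite !sat_Dep; setoid_rewrite Forall_map; setoid_rewrite Forall_forall.
    setoid_rewrite Hdall; setoid_rewrite Hdc.
    apply (forall_subteam_img g X
             (fun Y => (forall a, In a l -> determined a Y) -> determined c Y)).
  - simpl; setoid_rewrite Ha; [|intros p Hp; apply Hs; auto].
    setoid_rewrite img_singleton; apply (forall_img g X (fun u => ~ sat a (singleton u))).
  - simpl; rewrite Ha, Hb; [reflexivity | |]; intros p Hp; apply Hs; simpl; auto.
  - simpl; setoid_rewrite Ha; [setoid_rewrite Hb|]; [apply union_img | |];
      intros p Hp; apply Hs; simpl; auto.
  - simpl; rewrite Ha, Hb; [reflexivity | |]; intros p Hp; apply Hs; simpl; auto.
  - simpl; setoid_rewrite Ha; [setoid_rewrite Hb|];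
      [apply (forall_subteam_img g X (fun Y => sat a Y -> sat b Y)) | |];
      intros p Hp; apply Hs; simpl; auto.
Qed.

End SubstitutionLemma.

Lemma subst_Atom f : subst Atom f = f.
Proof.
  induction f using form_nested_ind; simpl; f_equal; auto.
  induction H; simpl; f_equal; auto.
Qed.

Lemma sat_singleton_agree ps f v w :
  (forall p, occurs p f -> In p ps) -> agree ps v w ->
  (sat f (singleton v) <-> sat f (singleton w)).
Proof.
  intros Hocc Hvw.
  set (g := fun (u : valuation) p => if in_dec Nat.eq_dec p ps then u p else w p).
  assert (Hg : g v = w).
  { apply functional_extensionality; intro p; unfold g.
    destruct (in_dec Nat.eq_dec p ps); auto. }
  rewrite <- (subst_Atom f) at 1; rewrite (sat_subst Atom g f), img_singleton, Hg; [reflexivity|].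
  intros p Hp; eapply pointwise_ext; [apply pointwise_Atom|].
  intro u; unfold g; destruct (in_dec Nat.eq_dec p ps) as [|Hn]; [reflexivity|].
  destruct (Hn (Hocc p Hp)).
Qed.

Definition subst_val (s : nat -> form) (v : valuation) : valuation :=
  fun p => if excluded_middle_informative (sat (s p) (singleton v)) then true else false.

Lemma subst_val_true s v p : subst_val s v p = true <-> sat (s p) (singleton v).
Proof. unfold subst_val; destruct excluded_middle_informative; split; auto; congruence. Qed.

Lemma sat_flat_subst s f :
  (forall p, flat (s p)) -> forall X, sat (subst s f) X <-> sat f (img (subst_val s) X).
Proof.
  intro Hs; apply sat_subst; intros p _.
  eapply pointwise_ext; [apply flat_pointwise, Hs|].
  intro v; symmetry; apply subst_val_true.
Qed.

Lemma flat_subst s f : (forall p, flat (s p)) -> flat f -> flat (subst s f).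
Proof.
  intros Hs Hf X; rewrite (sat_flat_subst s f Hs X), (Hf _).
  setoid_rewrite (sat_flat_subst s f Hs); setoid_rewrite img_singleton.
  symmetry; apply (forall_img _ X (fun u => sat f (singleton u))).
Qed.

Lemma substitution_of_flat L s :
  (forall p, inL L (s p)) -> (forall p, flat (s p)) -> substitution_of L s.
Proof.
  intros Hin Hs; destruct L; intro f; [| | intros; apply inL_PT].
  - induction f as [| | |l c Hl Hc| | | | |] using form_nested_ind; intro Hf;
      try (simpl in *; auto; tauto).
    simpl subst; rewrite inL_PD_Dep, Forall_map, Forall_forall in *.
    destruct Hf as [Hl' [Hc' Hcf]]; split; [intros a Ha; destruct (Hl' a Ha) | split];
      auto using flat_subst.
  - induction f; simpl; intros; auto; tauto.
Qed.

Lemma entails_sat1 L a b X : entails L [a] b -> sat a X -> sat b X.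
Proof. intros (_ & _ & H) Ha; apply H; intros f [<-|[]]; auto. Qed.

Lemma entails_sat2 L a b c X : entails L [a; b] c -> sat a X -> sat b X -> sat c X.
Proof. intros (_ & _ & H) Ha Hb; apply H; intros f [<-|[<-|[]]]; auto. Qed.

Lemma equivL_flat L f g : equivL L f g -> flat g -> flat f.
Proof.
  intros [Hfg Hgf] Hg X.
  assert (E : forall Y, sat f Y <-> sat g Y)
    by (intro Y; split; [apply (entails_sat1 L) | apply (entails_sat1 L)]; auto).
  rewrite E, (Hg X); setoid_rewrite E; reflexivity.
Qed.

Lemma equivL_pointwise L f g P :
  inL L f -> inL L g -> pointwise f P -> pointwise g P -> equivL L f g.
Proof.
  intros Hf Hg HfP HgP.
  split; (split; [intros h [<-|[]]; auto | split; auto]);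
    intros X HX; specialize (HX _ (or_introl eq_refl));
    [apply HgP, HfP | apply HfP, HgP]; auto.
Qed.

Fixpoint all_valuations (ps : list nat) : list valuation :=
  match ps with
  | [] => [fun _ => false]
  | p :: ps' =>
      flat_map (fun w => [fun q => if Nat.eqb q p then true else w q;
                          fun q => if Nat.eqb q p then false else w q]) (all_valuations ps')
  end.

Lemma all_valuations_complete ps v : exists w, In w (all_valuations ps) /\ agree ps v w.
Proof.
  induction ps as [|p ps (w & Hw & Hvw)]; simpl.
  - exists (fun _ => false); split; [left | intros q []]; auto.
  - exists (fun q => if Nat.eqb q p then v p else w q); split.
    + apply in_flat_map; exists w; split; auto; destruct (v p); simpl; auto.
    + intros q [<-|Hq]; [rewrite Nat.eqb_refl; auto|].
      destruct (Nat.eqb_spec q p) as [->|]; auto.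
Qed.

Lemma flat_equivL_Theta L ps phi :
  inL L phi -> (forall p, occurs p phi -> In p ps) -> consistent phi -> flat phi ->
  exists Xl, Xl <> [] /\ equivL L phi (Theta L ps Xl).
Proof.
  intros Hin Hocc (X & (v & Xv) & HX) Hflat.
  set (Xl := filter (fun w => if excluded_middle_informative (sat phi (singleton w))
                              then true else false) (all_valuations ps)).
  assert (Hcover : forall u, sat phi (singleton u) <-> exists w, In w Xl /\ agree ps u w).
  { intro u; split.
    - intro Hu; destruct (all_valuations_complete ps u) as (w & Hw & Huw).
      exists w; split; auto; apply filter_In; split; auto.
      destruct excluded_middle_informative as [|Hn]; auto.
      destruct Hn; apply (sat_singleton_agree ps phi u w); auto.
    - intros (w & Hw & Huw); apply filter_In in Hw as [_ Hw].
      destruct excluded_middle_informative as [Hs|]; [|discriminate].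
      apply (sat_singleton_agree ps phi u w); auto. }
  assert (Hne : Xl <> []).
  { destruct (proj1 (Hcover v) (sat_singleton phi X v HX Xv)) as (w & Hw & _).
    intros E; rewrite E in Hw; destruct Hw. }
  exists Xl; split; auto.
  apply equivL_pointwise with (fun u => exists w, In w Xl /\ agree ps u w);
    auto using inL_Theta, pointwise_Theta.
  eapply pointwise_ext; [apply flat_pointwise, Hflat | exact Hcover].
Qed.

(* PD has no implication: the flat formula phi -> p is expressed there as ~phi (x) p. *)
Definition projective_subst (L : logic) (phi : form) (w : valuation) (p : nat) : form :=
  if w p then match L with PD => Tensor (Neg phi) (Atom p) | _ => Imp phi (Atom p) end
  else And phi (Atom p).

Section ProjectiveSubst.

Variables (L : logic) (phi : form) (P : valuation -> Prop) (w : valuation).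
Hypotheses (Hphi : pointwise phi P) (Hw : P w).

Lemma pointwise_projective_subst p :
  pointwise (projective_subst L phi w p)
    (fun v => if w p then P v -> v p = true else P v /\ v p = true).
Proof.
  unfold projective_subst; destruct (w p); [destruct L|];
    try apply (pointwise_Imp _ _ _ _ Hphi (pointwise_Atom p));
    try apply (pointwise_And _ _ _ _ Hphi (pointwise_Atom p)).
  eapply pointwise_ext; [apply (pointwise_Tensor _ _ _ _ (pointwise_Neg phi) (pointwise_Atom p))|].
  intro v; cbv beta; rewrite (pointwise_singleton _ _ _ Hphi); destruct (classic (P v)); tauto.
Qed.

Lemma sat_projective_subst_Atom p X :
  sat phi X -> (sat (projective_subst L phi w p) X <-> sat (Atom p) X).
Proof.
  rewrite (Hphi X), (pointwise_projective_subst p X), (pointwise_Atom p X).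
  intro HX; split; intros H v Xv; specialize (H v Xv); specialize (HX v Xv);
    destruct (w p); tauto.
Qed.

Lemma projective_subst_val v : P (subst_val (projective_subst L phi w) v).
Proof.
  assert (Hval : forall p, subst_val (projective_subst L phi w) v p = true <->
                          (if w p then P v -> v p = true else P v /\ v p = true)).
  { intro p; rewrite subst_val_true.
    apply (pointwise_singleton _ _ _ (pointwise_projective_subst p)). }
  destruct (classic (P v)) as [Hv|Hv];
    [replace (subst_val _ v) with v | replace (subst_val _ v) with w]; auto;
    apply functional_extensionality; intro p; specialize (Hval p);
    destruct (w p), (v p), (subst_val _ v p); intuition congruence.
Qed.

End ProjectiveSubst.

Lemma flat_projective_of_flat L phi :
  inL L phi -> consistent phi -> flat phi -> flat_projective L phi.
Proof.
  intros Hin (X & (w & Xw) & HX) Hflat.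
  pose proof (flat_pointwise phi Hflat) as Hphi.
  pose proof (sat_singleton phi X w HX Xw) as Hw.
  set (s := projective_subst L phi w).
  assert (Hs : forall p, flat (s p))
    by (intro p; exact (pointwise_flat _ _ (pointwise_projective_subst L phi _ w Hphi p))).
  assert (Hsin : forall p, inL L (s p))
    by (intro p; unfold s, projective_subst; destruct (w p), L; simpl; auto).
  assert (Hsub : substitution_of L s) by (apply substitution_of_flat; auto).
  exists s; split; [split; auto | split; [|split]].
  - split; [intros f []| split; [apply Hsub; auto|]].
    intros Y _; rewrite sat_flat_subst by auto; apply Hphi.
    intros u (v & _ & ->); apply projective_subst_val; auto.
  - intro p; split; [intros f [<-|[<-|[]]]; auto | split; [apply inL_Atom|]].
    intros Y HY; apply (sat_projective_subst_Atom L phi _ w Hphi p Y); apply HY; simpl; auto.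
  - intro p; split; [intros f [<-|[<-|[]]]; auto using inL_Atom | split; [auto|]].
    intros Y HY; apply (sat_projective_subst_Atom L phi _ w Hphi p Y); apply HY; simpl; auto.
Qed.

Lemma subst_val_fixed L phi s v :
  (forall p, entails L [phi; s p] (Atom p)) -> (forall p, entails L [phi; Atom p] (s p)) ->
  sat phi (singleton v) -> subst_val s v = v.
Proof.
  intros Hs Hp Hv; apply functional_extensionality; intro p.
  apply eq_true_iff_eq; rewrite subst_val_true, <- (pointwise_singleton _ _ _ (pointwise_Atom p)).
  split; [apply (entails_sat2 L _ _ _ _ (Hs p)) | apply (entails_sat2 L _ _ _ _ (Hp p))]; auto.
Qed.

Lemma img_fixed g X : (forall v, X v -> g v = v) -> img g X = X.
Proof.
  intro H; apply team_ext; intro u; split; [intros (v & Xv & ->); rewrite H; auto | intro Xu].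
  exists u; rewrite H; auto.
Qed.

Lemma flat_of_flat_projective L phi : flat_projective L phi -> flat phi.
Proof.
  intros (s & [_ Hs] & (_ & _ & Hvalid) & Hsp & Hps) X.
  split; [intros; eapply sat_singleton; eauto | intro HX].
  rewrite <- (img_fixed (subst_val s) X), <- sat_flat_subst; auto.
  - apply Hvalid; intros f [].
  - intros v Xv; apply (subst_val_fixed L phi); auto.
Qed.

Theorem lemma4p6 (L : logic) (ps : list nat) (phi : form) :
  inL L phi ->
  (forall p, occurs p phi -> In p ps) ->
  consistent phi ->
  ((exists X : list valuation, X <> [] /\ equivL L phi (Theta L ps X)) <-> flat phi)
  /\ (flat phi <-> flat_projective L phi).
Proof.
  intros Hin Hocc Hcons; split; split.
  - intros (Xl & Hne & Heq).
    exact (equivL_flat L _ _ Heq (pointwise_flat _ _ (pointwise_Theta L ps Xl Hne))).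
  - apply flat_equivL_Theta; auto.
  - apply flat_projective_of_flat; auto.
  - apply flat_of_flat_projective.
Qed.
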